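(* The equation $x^2+y^2+z^2-xyz=4+rl^2$ has no solution $(x,y,z)\in\mathbb Z^3$ in each of the following cases: (i) $r=2$ and $l\ge13$ is a prime with $l\equiv\pm4\bmod9$; (ii) $r=12$ and $l\ge37$ is a prime with $l^2\equiv25\bmod32$ and $1+3l^2$ not a sum of two integer squares; (iii) $r=-2$ and $l\ge13$ is a prime; (iv) $r=-3$ and $l\ge17$ is a prime; (v) $r=-12$ and $l\ge37$ is a prime. *)

From mathcomp Require Import all_boot all_algebra.
Set Implicit Arguments. Unset Strict Implicit. Unset Printing Implicit Defensive.
Import GRing.Theory Num.Theory.
Local Open Scope ring_scope.

Definition sum_two_sq (n : int) : Prop := exists a b : int, n = a ^+ 2 + b ^+ 2.

Definition has_int_sol (r : int) (l : nat) : Prop :=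
  exists x y z : int, x ^+ 2 + y ^+ 2 + z ^+ 2 - x * y * z = 4 + r * (l%:Z) ^+ 2.

(* Vieta jumping turns a solution of x^2 + y^2 + z^2 - x y z = k into one (a, b, c) with 0 <= a
   and a^2 (a - 3) <= |k|; for k = 4 + r l^2 with l large this gives a + 2 < l.  The equation
   imposes congruences on a modulo a power of 2 and modulo 9 (or 3), which exclude a <= 2 when
   r > 0; when r < 0 such an a makes the left-hand side nonnegative.  For a >= 3 the identity
   (2b - ac)^2 - 4 r l^2 = (a - 2)(a + 2)(c^2 - 4) shows that r, up to a square factor, is a
   square modulo every odd prime factor p of a - 2 and a + 2 (p < l, and p <> 3 when 3 | r).
   Thue's lemma, used in place of quadratic reciprocity, confines such p to explicit classes
   mod 24, so a - 2 and a + 2 are both of the form 2^e 3^f m with m in these classes; a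
   computation modulo 1152 = 2^7 3^2 shows that no a satisfying the congruences has this
   property. *)

From Stdlib Require Import ZArith Lia List Znumtheory Zdiv Classical.

Local Open Scope Z_scope.
Local Open Scope bool_scope.

#[local] Existing Instances eqm_setoid Zplus_eqm Zminus_eqm Zmult_eqm.

Ltac mod_arith := Z.div_mod_to_equations; lia.

Definition markoff (x y z : Z) : Z := x * x + y * y + z * z - x * y * z.

Lemma markoff_eqm N x y z : eqm N (markoff x y z) (markoff (x mod N) (y mod N) (z mod N)).
Proof.
  unfold markoff.
  now setoid_rewrite (Zmod_eqm N x); setoid_rewrite (Zmod_eqm N y); setoid_rewrite (Zmod_eqm N z).
Qed.

Lemma eqm_of_divide_sub N a b : (N | a - b) -> eqm N a b.
Proof. intros [q Hq]. apply Z.cong_iff_ex. now exists q. Qed.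

Definition signed_solution (k s a b c : Z) : Prop :=
  0 <= a /\ 0 <= b /\ 0 <= c /\ (s = 1 \/ s = -1) /\ a * a + b * b + c * c - s * a * b * c = k.

Lemma signed_solution_of_solution k x y z : markoff x y z = k ->
  exists s, signed_solution k s (Z.abs x) (Z.abs y) (Z.abs z).
Proof.
  unfold markoff, signed_solution. intros E.
  assert (Hsq : forall u, Z.abs u * Z.abs u = u * u)
    by (intro u; rewrite <- Z.abs_mul; apply Z.abs_eq; nia).
  assert (Habs : Z.abs x * Z.abs y * Z.abs z = Z.abs (x * y * z)) by now rewrite !Z.abs_mul.
  rewrite !Hsq.
  destruct (Z.le_gt_cases 0 (x * y * z)); [exists 1 | exists (-1)]; repeat split; lia.
Qed.

Lemma signed_solution_perm k s a b c : signed_solution k s a b c ->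
  signed_solution k s b a c /\ signed_solution k s a c b.
Proof.
  unfold signed_solution. intros (? & ? & ? & ? & E).
  split; repeat split; try lia; rewrite <- E; ring.
Qed.

Lemma signed_solution_sort k s a b c : signed_solution k s a b c ->
  exists a' b' c', signed_solution k s a' b' c' /\ a' + b' + c' = a + b + c /\ a' <= b' <= c'.
Proof.
  intros H.
  destruct (signed_solution_perm _ _ _ _ _ H) as [Hba Hac].
  destruct (signed_solution_perm _ _ _ _ _ Hba) as [_ Hbca].
  destruct (signed_solution_perm _ _ _ _ _ Hac) as [Hcab _].
  destruct (signed_solution_perm _ _ _ _ _ Hcab) as [_ Hcba].
  destruct (Z.le_ge_cases a b), (Z.le_ge_cases b c), (Z.le_ge_cases a c);
    first [ exists a, b, c; split; [assumption | lia]
          | exists a, c, b; split; [assumption | lia]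
          | exists b, a, c; split; [assumption | lia]
          | exists b, c, a; split; [assumption | lia]
          | exists c, a, b; split; [assumption | lia]
          | exists c, b, a; split; [assumption | lia] ].
Qed.

(* Vieta jumping: c -> a b - c preserves the equation, and shrinks c when s = 1 and a b < 2 c. *)
Lemma markoff_descent_step k s a b c : signed_solution k s a b c -> a <= b <= c ->
  a * a * (a - 3) <= Z.abs k \/ exists s' c', signed_solution k s' a b c' /\ c' < c.
Proof.
  intros Hsol Hsorted. destruct Hsol as (Ha & Hb & Hc & [-> | ->] & E).
  - destruct (Z.le_gt_cases a 2) as [Ha2 | Ha3].
    { left. assert (a * a * (a - 3) <= 0) by (apply Z.mul_nonneg_nonpos; nia). lia. }
    destruct (Z.le_gt_cases c (a * b - c)) as [Hjump | Hjump].
    + left.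
      assert (0 <= (c - b) * (a * b - c - b)) by (apply Z.mul_nonneg_nonneg; lia).
      assert (0 <= (b * b - a * a) * (a - 2)) by (apply Z.mul_nonneg_nonneg; nia).
      nia.
    + right. destruct (Z.le_gt_cases 0 (a * b - c)).
      * exists 1, (a * b - c). split; [repeat split; try lia; rewrite <- E; ring | lia].
      * exists (-1), (c - a * b). split; [repeat split; try lia; rewrite <- E; ring | nia].
  - left.
    assert (a * a <= a * b) by nia. assert (a * a * a <= a * b * c) by nia.
    assert (0 <= a * a) by nia. nia.
Qed.

Lemma markoff_reduced_solution k : (exists x y z, markoff x y z = k) ->
  exists a b c, markoff a b c = k /\ 0 <= a /\ a * a * (a - 3) <= Z.abs k.
Proof.
  intros (x & y & z & E).
  destruct (signed_solution_of_solution _ _ _ _ E) as [s0 Hsol0].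
  assert (Hdescent : forall n : nat, forall s a b c, signed_solution k s a b c -> a + b + c < Z.of_nat n ->
            exists s' a' b' c', signed_solution k s' a' b' c' /\ a' * a' * (a' - 3) <= Z.abs k).
  { induction n as [| n IH]; intros s a b c Hsol Hn.
    - destruct Hsol as (? & ? & ? & _). lia.
    - destruct (signed_solution_sort _ _ _ _ _ Hsol) as (a' & b' & c' & Hsol' & Hsum & Hsorted).
      destruct (markoff_descent_step _ _ _ _ _ Hsol' Hsorted) as [Hred | (s'' & c'' & Hsol'' & Hc'')].
      + now exists s, a', b', c'.
      + apply (IH s'' a' b' c''); [assumption | lia]. }
  destruct (Hdescent (S (Z.to_nat (Z.abs x + Z.abs y + Z.abs z))) s0 _ _ _ Hsol0 ltac:(lia))
    as (s & a & b & c & (Ha & Hb & Hc & Hs & Habc) & Hbound).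
  exists a, b, (s * c). split; [| split; assumption].
  rewrite <- Habc. unfold markoff. destruct Hs as [-> | ->]; ring.
Qed.

Definition residues (N : Z) : list Z := map Z.of_nat (seq 0 (Z.to_nat N)).

Lemma in_residues N x : In x (residues N) <-> 0 <= x < N.
Proof.
  unfold residues. rewrite in_map_iff. split.
  - intros (n & <- & Hn). apply in_seq in Hn. lia.
  - intros Hx. exists (Z.to_nat x). rewrite in_seq. lia.
Qed.

Definition all_residues (N : Z) (P : Z -> bool) : bool := forallb P (residues N).

Lemma all_residuesP N P : 0 < N -> all_residues N P = true -> forall x, P (x mod N) = true.
Proof.
  intros HN Hall x. unfold all_residues in Hall. rewrite forallb_forall in Hall.
  apply Hall, in_residues, Z.mod_pos_bound, HN.
Qed.

(* The checks below branch with [if] rather than [||]: the VM evaluates both arguments of [orb]. *)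
Definition markoff_residue_check (N K : Z) (S : Z -> bool) : bool :=
  all_residues N (fun x => if S x then true else
    all_residues N (fun y => all_residues N (fun z => negb ((markoff x y z - K) mod N =? 0)))).

Lemma markoff_residue_checkP N K S x y z : 0 < N -> markoff_residue_check N K S = true ->
  (markoff x y z - K) mod N = 0 -> S (x mod N) = true.
Proof.
  intros HN Hcheck Hxyz.
  assert (Hx := all_residuesP _ _ HN Hcheck x). cbv beta in Hx.
  destruct (S (x mod N)); [reflexivity | exfalso].
  assert (Hz := all_residuesP _ _ HN (all_residuesP _ _ HN Hx y) z). cbv beta in Hz.
  rewrite <- Zminus_mod_idemp_l, <- markoff_eqm, Zminus_mod_idemp_l, Hxyz in Hz.
  discriminate.
Qed.

(* For even x and even h, markoff x y z mod 2h only depends on y and z mod h,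
   which makes the check below 4 times cheaper than markoff_residue_check. *)
Definition markoff_even_residue_check (h K : Z) (S : Z -> bool) : bool :=
  all_residues (2 * h) (fun x => if S x then true else Z.even x &&
    all_residues h (fun y => all_residues h (fun z => negb ((markoff x y z - K) mod (2 * h) =? 0)))).

Lemma markoff_shift_eqm h x y z : Z.even x = true -> Z.even h = true ->
  eqm (2 * h) (markoff x y z) (markoff x (y mod h) (z mod h)).
Proof.
  intros Hx Hh. apply Z.even_spec in Hx as [x' ->]. apply Z.even_spec in Hh as [h' ->].
  apply eqm_of_divide_sub.
  rewrite (Z_div_mod_eq_full y (2 * h')) at 1. rewrite (Z_div_mod_eq_full z (2 * h')) at 1.
  set (y1 := y / (2 * h')). set (z1 := z / (2 * h')).
  set (y0 := y mod (2 * h')). set (z0 := z mod (2 * h')).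
  exists (y1 * y0 + h' * y1 * y1 + z1 * z0 + h' * z1 * z1 - x' * (y1 * z0 + z1 * y0 + 2 * h' * y1 * z1)).
  unfold markoff. ring.
Qed.

Lemma markoff_even_residue_checkP h K S x y z : 0 < h -> Z.even h = true ->
  markoff_even_residue_check h K S = true ->
  (markoff x y z - K) mod (2 * h) = 0 -> S (x mod (2 * h)) = true.
Proof.
  intros Hh Hheven Hcheck Hxyz.
  assert (Hx := all_residuesP (2 * h) _ ltac:(lia) Hcheck x). cbv beta in Hx.
  destruct (S (x mod (2 * h))); [reflexivity | exfalso].
  apply andb_prop in Hx as [Hxeven Hyz].
  assert (Hz := all_residuesP _ _ Hh (all_residuesP _ _ Hh Hyz y) z). cbv beta in Hz.
  assert (E : eqm (2 * h) (markoff x y z) (markoff (x mod (2 * h)) (y mod h) (z mod h))).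
  { eapply eqm_trans; [apply markoff_eqm |].
    rewrite <- (Z.mod_mod_divide y (2 * h) h), <- (Z.mod_mod_divide z (2 * h) h) by (exists 2; ring).
    now apply markoff_shift_eqm. }
  rewrite <- Zminus_mod_idemp_l, <- E, Zminus_mod_idemp_l, Hxyz in Hz.
  discriminate.
Qed.

Definition nonsquare (r : Z) : Prop := forall s t, s * s = r * (t * t) -> t = 0.

Lemma prime_nonsquare q : prime q -> nonsquare q.
Proof.
  intros Hq s t E. destruct (Z.eq_dec t 0) as [| Ht]; [assumption | exfalso].
  assert (Hq2 := prime_ge_2 q Hq).
  set (g := Z.gcd s t).
  assert (Hg : 0 < g).
  { apply Z.le_neq. split; [apply Z.gcd_nonneg | intros H; apply Ht, (Z.gcd_eq_0_r s t); auto]. }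
  destruct (Z.gcd_divide_l s t) as [s' Hs], (Z.gcd_divide_r s t) as [t' Ht']. fold g in Hs, Ht'.
  assert (Hcop : Z.gcd s' t' = 1).
  { replace s' with (s / g) by (rewrite Hs; apply Z.div_mul; lia).
    replace t' with (t / g) by (rewrite Ht'; apply Z.div_mul; lia).
    apply Z.gcd_div_gcd; [lia | reflexivity]. }
  assert (E' : s' * s' = q * (t' * t')).
  { apply (Z.mul_cancel_r _ _ (g * g)); [nia |]. rewrite Hs, Ht' in E. nia. }
  assert (Hqs : (q | s'))
    by (destruct (prime_mult q Hq s' s') as [H | H]; [exists (t' * t'); lia | |]; auto).
  destruct Hqs as [s'' ->].
  assert (Hqt : (q | t')).
  { assert (E'' : t' * t' = q * (s'' * s'')) by (apply (Z.mul_cancel_l _ _ q); nia).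
    destruct (prime_mult q Hq t' t') as [H | H]; [exists (s'' * s''); lia | |]; auto. }
  assert (Hq1 : (q | 1)) by (rewrite <- Hcop; apply Z.gcd_greatest; [exists s''; ring | assumption]).
  apply Z.divide_pos_le in Hq1; lia.
Qed.

Lemma pigeonhole n N (g : Z -> Z) : 0 <= N < n ->
  (forall i, 0 <= i < n -> 0 <= g i < N) -> exists i j, 0 <= i /\ i < j < n /\ g i = g j.
Proof.
  intros HNn Hg. apply NNPP. intros Hinj.
  assert (Hdup : NoDup (map g (residues n))).
  { apply NoDup_map_NoDup_ForallPairs.
    - intros i j Hi Hj E. apply in_residues in Hi, Hj.
      destruct (Z.lt_total i j) as [Hlt | [Heq | Hgt]]; [| exact Heq |]; exfalso; apply Hinj.
      + exists i, j. repeat split; lia || exact E.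
      + exists j, i. repeat split; lia || now symmetry.
    - apply NoDup_map_NoDup_ForallPairs; [intros ? ? _ _; lia | apply seq_NoDup]. }
  assert (Hincl : incl (map g (residues n)) (residues N)).
  { intros v Hv. apply in_map_iff in Hv as (i & <- & Hi). apply in_residues, Hg, in_residues, Hi. }
  apply NoDup_incl_length in Hincl; [| exact Hdup].
  rewrite length_map in Hincl. unfold residues in Hincl. rewrite !length_map, !length_seq in Hincl. lia.
Qed.

Lemma thue_lemma p c : 1 < p -> exists s t, (s <> 0 \/ t <> 0) /\
  Z.abs s <= Z.sqrt p /\ Z.abs t <= Z.sqrt p /\ (p | s - c * t).
Proof.
  intros Hp. set (q := Z.sqrt p + 1).
  assert (Hsqrt := Z.sqrt_spec p ltac:(lia)). assert (Hsqrt0 := Z.sqrt_nonneg p).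
  assert (Hq : 0 < q) by lia.
  (* The q^2 > p pairs (u, v) in [0, q)^2, encoded as i = u q + v, collide modulo p. *)
  destruct (pigeonhole (q * q) p (fun i => (i / q - c * (i mod q)) mod p)) as (i & j & Hi0 & Hij & E).
  { cbv zeta in Hsqrt. unfold q. nia. }
  { intros i _. apply Z.mod_pos_bound. lia. }
  assert (Hi := Z.mod_pos_bound i q Hq). assert (Hj := Z.mod_pos_bound j q Hq).
  assert (Hiq : 0 <= i / q < q) by (split; [apply Z.div_pos | apply Z.div_lt_upper_bound]; lia).
  assert (Hjq : 0 <= j / q < q) by (split; [apply Z.div_pos | apply Z.div_lt_upper_bound]; lia).
  exists (i / q - j / q), (i mod q - j mod q). repeat split; try lia.
  - destruct (Z.eq_dec (i / q) (j / q)); [right | left]; [| lia].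
    assert (Hi' := Z_div_mod_eq_full i q). assert (Hj' := Z_div_mod_eq_full j q). nia.
  - apply Z.cong_iff_ex in E as [m Hm]. exists m. rewrite <- Hm. ring.
Qed.

Lemma prime_mod_neq0 p q : prime p -> prime q -> p <> q -> p mod q <> 0.
Proof.
  intros Hp Hq Hpq E. apply Hpq. symmetry. apply prime_div_prime; [assumption | assumption |].
  apply Z.mod_divide; [apply prime_ge_2 in Hq; lia | exact E].
Qed.

Lemma negative_nonsquare r : r < 0 -> nonsquare r.
Proof. intros Hr s t E. assert (Hs := Z.square_nonneg s). assert (Ht := Z.square_nonneg t). nia. Qed.

(* Thue's lemma for c = A / B mod p gives small s, t with s = c t mod p, hence
   s^2 - r t^2 = (t / B)^2 (A^2 - r B^2) = 0 mod p. *)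
Lemma small_norm_multiple p r A B : prime p -> (p | A * A - r * B * B) -> ~ (p | B) ->
  exists s t, t <> 0 /\ s * s < p /\ t * t < p /\ (p | s * s - r * t * t).
Proof.
  intros Hp HA HB. assert (Hp2 := prime_ge_2 p Hp).
  destruct (rel_prime_bezout _ _ (prime_rel_prime p Hp B HB)) as [u v Huv].
  destruct (thue_lemma p (A * v) ltac:(lia)) as (s & t & Hst & Hs & Ht & Hd).
  assert (Hsqrt := Z.sqrt_spec p ltac:(lia)). cbv zeta in Hsqrt.
  assert (Hsqrt0 := Z.sqrt_nonneg p).
  assert (Hsqrt_lt : Z.sqrt p * Z.sqrt p < p).
  { destruct (Z.eq_dec (Z.sqrt p * Z.sqrt p) p) as [E | ]; [| lia].
    exfalso. apply (square_not_prime (Z.sqrt p)). now rewrite E. }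
  assert (Ht0 : t <> 0).
  { intros ->. destruct Hst as [Hs0 | []]; [| reflexivity]. destruct Hd as [k Hk].
    rewrite Z.mul_0_r, Z.sub_0_r in Hk. subst s. rewrite Z.abs_mul in Hs.
    assert (Z.abs k >= 1) by lia. nia. }
  exists s, t. repeat split; [exact Ht0 | nia | nia |].
  assert (E : s * s - r * t * t = (s - A * v * t) * (s + A * v * t) + t * t * v * v * (A * A - r * B * B)
                                  - t * t * r * u * p * (v * B + 1)
                                  + t * t * r * (u * p + v * B - 1) * (v * B + 1)) by ring.
  rewrite Huv, Z.sub_diag, Z.mul_0_r, Z.mul_0_l, Z.add_0_r in E. rewrite E.
  apply Z.divide_sub_r; [apply Z.divide_add_r |].
  - now apply Z.divide_mul_l.
  - now apply Z.divide_mul_r.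
  - apply Z.divide_mul_l, Z.divide_mul_r, Z.divide_refl.
Qed.

Definition admissible (skip3 : bool) (p : Z) : bool :=
  (p mod 2 =? 1) && (negb skip3 || negb (p mod 3 =? 0)).

Lemma admissible_prime skip3 p : prime p -> p <> 2 -> (skip3 = true -> p <> 3) ->
  admissible skip3 (p mod 24) = true.
Proof.
  intros Hp H2 H3. unfold admissible.
  rewrite !Z.mod_mod_divide by (exists 12; reflexivity) || (exists 8; reflexivity).
  assert (Hodd := prime_mod_neq0 p 2 Hp prime_2 H2).
  assert (Hp2 := Z.mod_pos_bound p 2 ltac:(lia)).
  replace (p mod 2) with 1 by lia. destruct skip3; [| reflexivity].
  assert (H3' := prime_mod_neq0 p 3 Hp prime_3 (H3 eq_refl)).
  apply Z.eqb_neq in H3'. now rewrite H3'.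
Qed.

Definition norm_class_check (skip3 : bool) (r j : Z) (G : Z -> bool) : bool :=
  let N := 24 * Z.abs j in
  all_residues 24 (fun p => if admissible skip3 p && negb (G p) then
    all_residues N (fun s => all_residues N (fun t => negb ((s * s - r * t * t - j * p) mod N =? 0)))
  else true).

Lemma norm_class_checkP skip3 r j G s t p : j <> 0 -> norm_class_check skip3 r j G = true ->
  s * s - r * t * t = j * p -> admissible skip3 (p mod 24) = true -> G (p mod 24) = true.
Proof.
  intros Hj Hcheck E Hadm. set (N := 24 * Z.abs j) in Hcheck.
  assert (HN : 0 < N) by lia.
  assert (Hp := all_residuesP 24 _ ltac:(lia) Hcheck p).
  cbv beta in Hp. rewrite Hadm in Hp. destruct (G (p mod 24)); [reflexivity | exfalso].
  assert (Hs := all_residuesP N _ HN Hp s).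
  assert (Ht := all_residuesP N _ HN Hs t). cbv beta in Ht.
  assert (Hcong : (s mod N * (s mod N) - r * (t mod N) * (t mod N) - j * (p mod 24)) mod N = 0).
  { change (eqm N (s mod N * (s mod N) - r * (t mod N) * (t mod N) - j * (p mod 24)) 0).
    setoid_rewrite (Zmod_eqm N s). setoid_rewrite (Zmod_eqm N t). rewrite E.
    apply eqm_of_divide_sub. exists (Z.sgn j * (p / 24)). unfold N.
    rewrite (Z_div_mod_eq_full p 24) at 1.
    assert (Ej := Z.abs_sgn j). set (a := Z.abs j) in *. set (g := Z.sgn j) in *.
    rewrite <- Ej. ring. }
  fold N in Ht. now rewrite Hcong in Ht.
Qed.

(* A small norm s^2 - r t^2 = j p, with s^2, t^2 < p, has 0 < |j| <= |r| and j r < 0. *)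
Definition norm_classes_check (skip3 : bool) (r : Z) (G : Z -> bool) : bool :=
  all_residues (2 * Z.abs r + 1) (fun i => let j := i - Z.abs r in
    (0 <=? j * r) || norm_class_check skip3 r j G).

Lemma prime_class_of_norm_form skip3 r G : nonsquare r -> norm_classes_check skip3 r G = true ->
  forall p A B, prime p -> p <> 2 -> (skip3 = true -> p <> 3) ->
  (p | A * A - r * B * B) -> ~ (p | B) -> G (p mod 24) = true.
Proof.
  intros Hr Hcheck p A B Hp H2 H3 HA HB.
  destruct (small_norm_multiple p r A B Hp HA HB) as (s & t & Ht & Hs & Htp & [j Hj]).
  assert (Hj0 : j <> 0) by (intros ->; apply Ht, (Hr s t); lia).
  assert (Hjr : j * r < 0 /\ Z.abs j <= Z.abs r).
  { assert (Hp2 := prime_ge_2 p Hp). assert (Ht2 : 0 < t * t) by nia. assert (0 <= s * s) by nia.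
    destruct (Z.lt_trichotomy r 0) as [Hr0 | [-> | Hr0]].
    - assert (0 < j) by nia. assert (j < 1 - r) by nia. nia.
    - now specialize (Hr 0 1 eq_refl).
    - assert (j < 0) by nia. assert (- r < j) by nia. nia. }
  assert (Hi := all_residuesP (2 * Z.abs r + 1) _ ltac:(lia) Hcheck (j + Z.abs r)). cbv beta in Hi.
  rewrite Z.mod_small, Z.add_simpl_r in Hi by lia.
  apply Bool.orb_true_iff in Hi as [Hi | Hi]; [apply Z.leb_le in Hi; lia |].
  apply (norm_class_checkP skip3 r j G s t p Hj0 Hi); [lia | now apply admissible_prime].
Qed.

Definition mul_closed24 (G : Z -> bool) : bool :=
  all_residues 24 (fun u => all_residues 24 (fun v => negb (G u && G v) || G ((u * v) mod 24))).

Lemma mul_closed24P G u v : mul_closed24 G = true ->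
  G (u mod 24) = true -> G (v mod 24) = true -> G ((u * v) mod 24) = true.
Proof.
  intros Hcheck Hu Hv.
  assert (H := all_residuesP 24 _ ltac:(lia) (all_residuesP 24 _ ltac:(lia) Hcheck u) v).
  cbv beta in H. rewrite Hu, Hv, <- Z.mul_mod in H by lia. exact H.
Qed.

Definition class_decomposable (skip3 : bool) (G : Z -> bool) (n : Z) : Prop :=
  exists e f m, 0 <= e /\ 0 <= f /\ (skip3 = false -> f = 0) /\
    n = 2 ^ e * 3 ^ f * m /\ G (m mod 24) = true.

Lemma class_decomposable_of_prime_factors skip3 G n : mul_closed24 G = true -> G 1 = true -> 0 < n ->
  (forall p, prime p -> (p | n) -> p <> 2 -> (skip3 = true -> p <> 3) -> G (p mod 24) = true) ->
  class_decomposable skip3 G n.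
Proof.
  intros Hmul HG1 Hn. assert (Hn0 : 0 <= n) by lia. revert Hn. pattern n.
  apply Z_lt_induction; [clear n Hn0; intros n IH Hn Hfactors | exact Hn0].
  destruct (Z.eq_dec n 1) as [-> | Hn1]; [now exists 0, 0, 1 |].
  destruct (prime_dec n) as [Hprime | Hcomposite].
  - destruct (Z.eq_dec n 2) as [-> | Hn2]; [now exists 1, 0, 1 |].
    destruct skip3 eqn:Hskip3; [destruct (Z.eq_dec n 3) as [-> | Hn3]; [now exists 0, 1, 1 |] |];
      exists 0, 0, n; repeat split; try lia; apply Hfactors; auto using Z.divide_refl; discriminate.
  - destruct (not_prime_divide n ltac:(lia) Hcomposite) as (d & Hd & q & Hq).
    assert (Hq1 : 1 < q < n) by nia.
    assert (Hfactors' : forall d', (d' | n) -> forall p, prime p -> (p | d') -> p <> 2 ->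
                          (skip3 = true -> p <> 3) -> G (p mod 24) = true).
    { intros d' Hd' p Hp Hpd. apply Hfactors, (Z.divide_trans _ d'); assumption. }
    destruct (IH d ltac:(lia) ltac:(lia) (Hfactors' d ltac:(rewrite Hq; apply Z.divide_factor_r)))
      as (e1 & f1 & m1 & He1 & Hf1 & Ht1 & Hd1 & HG1').
    destruct (IH q ltac:(lia) ltac:(lia) (Hfactors' q ltac:(rewrite Hq; apply Z.divide_factor_l)))
      as (e2 & f2 & m2 & He2 & Hf2 & Ht2 & Hq2 & HG2').
    exists (e1 + e2), (f1 + f2), (m1 * m2). repeat split; try lia.
    + intros Hskip3. now rewrite (Ht1 Hskip3), (Ht2 Hskip3).
    + rewrite Hq, Hd1, Hq2, !Z.pow_add_r by lia. ring.
    + now apply mul_closed24P.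
Qed.

(* 1152 = 2^7 * 3^2: class decompositions 2^e 3^f m are visible mod 1152 as long as
   2^e 3^f divides 48; otherwise 32 or 9 divides n. *)
Definition decomposable_residue (skip3 : bool) (G : Z -> bool) (c : Z) : bool :=
  (c mod 32 =? 0) || (skip3 && (c mod 9 =? 0)) ||
  existsb (fun e => existsb (fun f => let d := 2 ^ e * 3 ^ f in (c mod d =? 0) && G ((c / d) mod 24))
    (residues (if skip3 then 2 else 1))) (residues 5).

Lemma decomposable_residue_of_class skip3 G n : class_decomposable skip3 G n ->
  decomposable_residue skip3 G (n mod 1152) = true.
Proof.
  intros (e & f & m & He & Hf & Hskip3 & -> & HG). unfold decomposable_residue.
  destruct (Z_lt_le_dec e 5) as [He5 | He5].
  2: { rewrite Z.mod_mod_divide by (exists 36; reflexivity).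
       replace e with (5 + (e - 5)) by lia. rewrite Z.pow_add_r by lia.
       replace (2 ^ 5 * 2 ^ (e - 5) * 3 ^ f * m) with ((2 ^ (e - 5) * 3 ^ f * m) * 32) by ring.
       now rewrite Z_mod_mult. }
  destruct (Z_lt_le_dec f (if skip3 then 2 else 1)) as [Hf2 | Hf2].
  2: { destruct skip3; [| specialize (Hskip3 eq_refl); lia].
       rewrite (Z.mod_mod_divide _ _ 9) by (exists 128; reflexivity).
       replace f with (2 + (f - 2)) by lia. rewrite Z.pow_add_r by lia.
       replace (2 ^ e * (3 ^ 2 * 3 ^ (f - 2)) * m) with ((2 ^ e * 3 ^ (f - 2) * m) * 9) by ring.
       rewrite Z_mod_mult. now rewrite Bool.orb_true_r. }
  apply Bool.orb_true_iff. right. apply existsb_exists. exists e. split; [apply in_residues; lia |].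
  apply existsb_exists. exists f. split; [apply in_residues; destruct skip3; lia |]. cbv zeta.
  assert (H48 : (2 ^ e * 3 ^ f | 48)).
  { assert (Hf1 : f <= 1) by (destruct skip3; lia).
    exists (2 ^ (4 - e) * 3 ^ (1 - f)).
    replace (2 ^ (4 - e) * 3 ^ (1 - f) * (2 ^ e * 3 ^ f)) with (2 ^ (4 - e + e) * 3 ^ (1 - f + f))
      by (rewrite !Z.pow_add_r by lia; ring).
    now rewrite Z.sub_add, Z.sub_add. }
  destruct H48 as [w Hw].
  assert (Hd : 0 < 2 ^ e * 3 ^ f) by (apply Z.mul_pos_pos; apply Z.pow_pos_nonneg; lia).
  assert (Hc : (2 ^ e * 3 ^ f * m) mod 1152
              = (m - 24 * w * ((2 ^ e * 3 ^ f * m) / 1152)) * (2 ^ e * 3 ^ f)).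
  { rewrite Zmod_eq_full by lia. replace 1152 with (24 * 48) at 2 by reflexivity. rewrite Hw. ring. }
  rewrite Hc, Z_mod_mult, Z_div_mult by lia.
  replace (m - 24 * w * _) with (m + (- (w * ((2 ^ e * 3 ^ f * m) / 1152))) * 24) by ring.
  now rewrite Z_mod_plus_full, HG.
Qed.

Definition shifted_pair_check (M2 M3 : Z) (S2 S3 : Z -> bool) (skip3 : bool) (G : Z -> bool) : bool :=
  all_residues 1152 (fun a => negb (S2 (a mod M2) && S3 (a mod M3) &&
    decomposable_residue skip3 G ((a - 2) mod 1152) && decomposable_residue skip3 G ((a + 2) mod 1152))).

Lemma shifted_pair_checkP M2 M3 S2 S3 skip3 G a : 0 < M2 -> 0 < M3 -> (M2 | 1152) -> (M3 | 1152) ->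
  shifted_pair_check M2 M3 S2 S3 skip3 G = true -> S2 (a mod M2) = true -> S3 (a mod M3) = true ->
  class_decomposable skip3 G (a - 2) -> class_decomposable skip3 G (a + 2) -> False.
Proof.
  intros HM2 HM3 HM2d HM3d Hcheck H2 H3 Hminus Hplus.
  assert (H := all_residuesP 1152 _ ltac:(lia) Hcheck a). cbv beta in H.
  rewrite !Z.mod_mod_divide, Zminus_mod_idemp_l, Zplus_mod_idemp_l in H by assumption.
  apply decomposable_residue_of_class in Hminus, Hplus.
  now rewrite H2, H3, Hminus, Hplus in H.
Qed.

Lemma odd_prime_divide_double p n : prime p -> p <> 2 -> (p | 2 * n) -> (p | n).
Proof.
  intros Hp H2 Hpn. destruct (prime_mult p Hp 2 n Hpn) as [Hp2 | Hp2]; [| exact Hp2].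
  now apply prime_div_prime in Hp2; [| | exact prime_2].
Qed.

Lemma odd_prime_divisor_double_prime p L : prime p -> prime L -> p <> 2 -> (p | 2 * L) -> p = L.
Proof. intros Hp HL H2 HpL. now apply prime_div_prime, odd_prime_divide_double. Qed.

Lemma shift_lt_of_cubic_bound a L : 3 <= a -> a * a * (a - 3) < (L - 2) * (L - 2) * (L - 5) -> a + 2 < L.
Proof.
  intros Ha Hbound. apply Z.nle_gt. intros HaL.
  assert (0 <= a * a * (a - 3)) by (apply Z.mul_nonneg_nonneg; nia).
  destruct (Z_lt_le_dec L 5).
  - assert ((L - 2) * (L - 2) * (L - 5) <= 0) by (apply Z.mul_nonneg_nonpos; nia). lia.
  - assert ((L - 2) * (L - 2) <= a * a) by (apply Z.mul_le_mono_nonneg; lia).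
    assert ((L - 2) * (L - 2) * (L - 5) <= a * a * (a - 3)) by (apply Z.mul_le_mono_nonneg; nia).
    lia.
Qed.

Section ClassObstruction.

Variables (skip3 : bool) (r : Z) (G : Z -> bool).
Hypotheses (r_nonsquare : nonsquare r) (G_norm : norm_classes_check skip3 r G = true)
  (G_mul : mul_closed24 G = true) (G_one : G 1 = true).

(* (2b - ac)^2 - 4 (markoff a b c - 4) = (a^2 - 4) (c^2 - 4), so every odd prime factor of
   a - 2 and a + 2 that is coprime to m makes r a square modulo it. *)
Lemma markoff_shifts_decomposable k m a b c : markoff a b c = k -> 4 * (k - 4) = r * m * m -> 3 <= a ->
  (forall p, prime p -> p <> 2 -> (p | m) -> a + 2 < p) ->
  class_decomposable skip3 G (a - 2) /\ class_decomposable skip3 G (a + 2).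
Proof.
  intros E Hk Ha Hm.
  assert (Hid : (2 * b - a * c) * (2 * b - a * c) - r * m * m = (a - 2) * ((a + 2) * (c * c - 4))).
  { rewrite <- Hk, <- E. unfold markoff. ring. }
  assert (Hfactor : forall n, (n | (a - 2) * ((a + 2) * (c * c - 4))) -> 0 < n <= a + 2 ->
            class_decomposable skip3 G n).
  { intros n Hn Hn_bound. apply class_decomposable_of_prime_factors; [assumption | assumption | lia |].
    intros p Hp Hpn H2 H3. assert (Hp_le : p <= n) by (apply Z.divide_pos_le; [lia | assumption]).
    apply (prime_class_of_norm_form skip3 r G r_nonsquare G_norm p (2 * b - a * c) m Hp H2 H3).
    - rewrite Hid. now apply (Z.divide_trans _ n).
    - intros Hpm. specialize (Hm p Hp H2 Hpm). lia. }
  split; apply Hfactor; try lia.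
  - now apply Z.divide_mul_l, Z.divide_refl.
  - now apply Z.divide_mul_r, Z.divide_mul_l, Z.divide_refl.
Qed.

Lemma markoff_no_solution_of_checks M2 M3 S2 S3 k m L : 0 < M2 -> 0 < M3 -> (M2 | 1152) -> (M3 | 1152) ->
  shifted_pair_check M2 M3 S2 S3 skip3 G = true -> 4 * (k - 4) = r * m * m ->
  (forall a b c, markoff a b c = k -> S2 (a mod M2) = true /\ S3 (a mod M3) = true) ->
  (forall a b c, markoff a b c = k -> 0 <= a <= 2 -> False) ->
  (forall p, prime p -> p <> 2 -> (p | m) -> p = L) -> Z.abs k < (L - 2) * (L - 2) * (L - 5) ->
  ~ exists x y z, markoff x y z = k.
Proof.
  intros HM2 HM3 HM2d HM3d Hcheck Hk Hlocal Hsmall Hm HkL Hsol.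
  destruct (markoff_reduced_solution k Hsol) as (a & b & c & E & Ha & Hbound).
  destruct (Z_lt_le_dec a 3) as [Ha3 | Ha3]; [exact (Hsmall a b c E ltac:(lia)) |].
  destruct (Hlocal a b c E) as [H2 H3].
  assert (HaL : a + 2 < L) by (apply shift_lt_of_cubic_bound; lia).
  assert (Hm' : forall p, prime p -> p <> 2 -> (p | m) -> a + 2 < p)
    by (intros p Hp H2' Hpm; rewrite (Hm p Hp H2' Hpm); exact HaL).
  destruct (markoff_shifts_decomposable k m a b c E Hk Ha3 Hm') as [Hminus Hplus].
  exact (shifted_pair_checkP M2 M3 S2 S3 skip3 G a HM2 HM3 HM2d HM3d Hcheck H2 H3 Hminus Hplus).
Qed.

End ClassObstruction.

Lemma prime_sqr_mod8 L : prime L -> L <> 2 -> (L * L) mod 8 = 1.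
Proof.
  intros HL H2. assert (Hodd := prime_mod_neq0 L 2 HL prime_2 H2).
  rewrite Z.mul_mod by lia.
  assert (HL8 : L mod 8 = 1 \/ L mod 8 = 3 \/ L mod 8 = 5 \/ L mod 8 = 7) by (Z.div_mod_to_equations; lia).
  now destruct HL8 as [-> | [-> | [-> | ->]]].
Qed.

Lemma prime_sqr_mod3 L : prime L -> L <> 3 -> (L * L) mod 3 = 1.
Proof.
  intros HL H3. assert (H := prime_mod_neq0 L 3 HL prime_3 H3).
  rewrite Z.mul_mod by lia.
  assert (HL3 : L mod 3 = 1 \/ L mod 3 = 2) by (Z.div_mod_to_equations; lia).
  now destruct HL3 as [-> | ->].
Qed.

Lemma markoff_small_nonneg a b c : 0 <= a <= 2 -> 0 <= markoff a b c.
Proof.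
  intros Ha. unfold markoff.
  assert (Hbc := Z.square_nonneg (b - c)).
  assert (Hb := Z.square_nonneg b). assert (Hc := Z.square_nonneg c).
  assert (Ha' : a = 0 \/ a = 1 \/ a = 2) by lia. destruct Ha' as [-> | [-> | ->]]; nia.
Qed.

Definition sqrt2_classes (p : Z) : bool := (p mod 8 =? 1) || (p mod 8 =? 7).
Definition sqrt_m2_classes (p : Z) : bool := (p mod 8 =? 1) || (p mod 8 =? 3).
Definition sqrt3_classes (p : Z) : bool := (p mod 12 =? 1) || (p mod 12 =? 11).
Definition sqrt_m3_classes (p : Z) : bool := p mod 6 =? 1.

Lemma sqrt2_classes_norm : norm_classes_check false 2 sqrt2_classes = true.
Proof. vm_compute. reflexivity. Qed.
Lemma sqrt_m2_classes_norm : norm_classes_check false (-2) sqrt_m2_classes = true.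
Proof. vm_compute. reflexivity. Qed.
Lemma sqrt3_classes_norm : norm_classes_check true 3 sqrt3_classes = true.
Proof. vm_compute. reflexivity. Qed.
Lemma sqrt_m3_classes_norm : norm_classes_check true (-3) sqrt_m3_classes = true.
Proof. vm_compute. reflexivity. Qed.

Lemma sqrt2_classes_mul : mul_closed24 sqrt2_classes = true.
Proof. vm_compute. reflexivity. Qed.
Lemma sqrt_m2_classes_mul : mul_closed24 sqrt_m2_classes = true.
Proof. vm_compute. reflexivity. Qed.
Lemma sqrt3_classes_mul : mul_closed24 sqrt3_classes = true.
Proof. vm_compute. reflexivity. Qed.
Lemma sqrt_m3_classes_mul : mul_closed24 sqrt_m3_classes = true.
Proof. vm_compute. reflexivity. Qed.

Definition odd_or_4_mod8 (a : Z) : bool := Z.odd a || (a mod 8 =? 4).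
Definition zero_mod3 (a : Z) : bool := a mod 3 =? 0.

Lemma markoff_mod8_eq6 : markoff_residue_check 8 6 odd_or_4_mod8 = true.
Proof. vm_compute. reflexivity. Qed.
Lemma markoff_mod3_eq0 : markoff_residue_check 3 0 zero_mod3 = true.
Proof. vm_compute. reflexivity. Qed.
Lemma shifted_pair_check_2 : shifted_pair_check 8 3 odd_or_4_mod8 zero_mod3 false sqrt2_classes = true.
Proof. vm_compute. reflexivity. Qed.

Lemma markoff_no_solution_2 L : prime L -> 13 <= L -> ~ exists x y z, markoff x y z = 4 + 2 * L * L.
Proof.
  intros HL HL13.
  assert (HL8 := prime_sqr_mod8 L HL ltac:(lia)). assert (HL3 := prime_sqr_mod3 L HL ltac:(lia)).
  assert (Hlocal : forall a b c, markoff a b c = 4 + 2 * L * L ->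
                     odd_or_4_mod8 (a mod 8) = true /\ zero_mod3 (a mod 3) = true).
  { intros a b c E. split.
    - apply (markoff_residue_checkP 8 6 _ a b c); [lia | exact markoff_mod8_eq6 | rewrite E; mod_arith].
    - apply (markoff_residue_checkP 3 0 _ a b c); [lia | exact markoff_mod3_eq0 | rewrite E; mod_arith]. }
  apply (markoff_no_solution_of_checks false 2 sqrt2_classes (prime_nonsquare 2 prime_2) sqrt2_classes_norm
    sqrt2_classes_mul eq_refl 8 3 odd_or_4_mod8 zero_mod3 _ (2 * L) L);
    [lia | lia | now exists 144 | now exists 384 | exact shifted_pair_check_2 | ring | exact Hlocal | | |].
  - intros a b c E Ha. destruct (Hlocal a b c E) as [H8 H3].
    assert (Ha' : a = 0 \/ a = 1 \/ a = 2) by lia. destruct Ha' as [-> | [-> | ->]]; discriminate.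
  - intros p Hp Hp2. now apply odd_prime_divisor_double_prime.
  - rewrite Z.abs_eq by nia. nia.
Qed.

Definition odd_or_0_mod8 (a : Z) : bool := Z.odd a || (a mod 8 =? 0).

Lemma markoff_mod8_eq2 : markoff_residue_check 8 2 odd_or_0_mod8 = true.
Proof. vm_compute. reflexivity. Qed.
Lemma shifted_pair_check_m2 :
  shifted_pair_check 8 3 odd_or_0_mod8 (fun _ => true) false sqrt_m2_classes = true.
Proof. vm_compute. reflexivity. Qed.

Lemma markoff_no_solution_m2 L : prime L -> 13 <= L -> ~ exists x y z, markoff x y z = 4 + (-2) * L * L.
Proof.
  intros HL HL13. assert (HL8 := prime_sqr_mod8 L HL ltac:(lia)).
  apply (markoff_no_solution_of_checks false (-2) sqrt_m2_classes (negative_nonsquare (-2) ltac:(lia))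
    sqrt_m2_classes_norm sqrt_m2_classes_mul eq_refl 8 3 odd_or_0_mod8 (fun _ => true) _ (2 * L) L);
    [lia | lia | now exists 144 | now exists 384 | exact shifted_pair_check_m2 | ring | | | |].
  - intros a b c E. split; [| reflexivity].
    apply (markoff_residue_checkP 8 2 _ a b c); [lia | exact markoff_mod8_eq2 | rewrite E; mod_arith].
  - intros a b c E Ha. assert (H := markoff_small_nonneg a b c Ha). lia.
  - intros p Hp Hp2. now apply odd_prime_divisor_double_prime.
  - rewrite Z.abs_neq by nia. nia.
Qed.

Definition odd_or_0_mod4 (a : Z) : bool := Z.odd a || (a mod 4 =? 0).
Definition zero_mod3_or_pm1_mod9 (a : Z) : bool := (a mod 3 =? 0) || (a mod 9 =? 1) || (a mod 9 =? 8).

Lemma markoff_mod8_eq1 : markoff_residue_check 8 1 odd_or_0_mod4 = true.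
Proof. vm_compute. reflexivity. Qed.
Lemma markoff_mod9_eq1 : markoff_residue_check 9 1 zero_mod3_or_pm1_mod9 = true.
Proof. vm_compute. reflexivity. Qed.
Lemma shifted_pair_check_m3 :
  shifted_pair_check 8 9 odd_or_0_mod4 zero_mod3_or_pm1_mod9 true sqrt_m3_classes = true.
Proof. vm_compute. reflexivity. Qed.

Lemma markoff_no_solution_m3 L : prime L -> 17 <= L -> ~ exists x y z, markoff x y z = 4 + (-3) * L * L.
Proof.
  intros HL HL17.
  assert (HL8 := prime_sqr_mod8 L HL ltac:(lia)). assert (HL3 := prime_sqr_mod3 L HL ltac:(lia)).
  apply (markoff_no_solution_of_checks true (-3) sqrt_m3_classes (negative_nonsquare (-3) ltac:(lia))
    sqrt_m3_classes_norm sqrt_m3_classes_mul eq_refl 8 9 odd_or_0_mod4 zero_mod3_or_pm1_mod9 _ (2 * L) L);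
    [lia | lia | now exists 144 | now exists 128 | exact shifted_pair_check_m3 | ring | | | |].
  - intros a b c E. split.
    + apply (markoff_residue_checkP 8 1 _ a b c); [lia | exact markoff_mod8_eq1 | rewrite E; mod_arith].
    + apply (markoff_residue_checkP 9 1 _ a b c); [lia | exact markoff_mod9_eq1 | rewrite E; mod_arith].
  - intros a b c E Ha. assert (H := markoff_small_nonneg a b c Ha). lia.
  - intros p Hp Hp2. now apply odd_prime_divisor_double_prime.
  - rewrite Z.abs_neq by nia. nia.
Qed.

Definition odd_or_14_18_mod32 (a : Z) : bool := Z.odd a || (a mod 32 =? 14) || (a mod 32 =? 18).

Lemma markoff_mod32_eq24 : markoff_residue_check 32 24 odd_or_14_18_mod32 = true.
Proof. vm_compute. reflexivity. Qed.
Lemma shifted_pair_check_m12 :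
  shifted_pair_check 32 9 odd_or_14_18_mod32 zero_mod3_or_pm1_mod9 true sqrt_m3_classes = true.
Proof. vm_compute. reflexivity. Qed.

Lemma markoff_no_solution_m12 L : prime L -> 37 <= L -> ~ exists x y z, markoff x y z = 4 + (-12) * L * L.
Proof.
  intros HL HL37.
  assert (HL8 := prime_sqr_mod8 L HL ltac:(lia)). assert (HL3 := prime_sqr_mod3 L HL ltac:(lia)).
  apply (markoff_no_solution_of_checks true (-3) sqrt_m3_classes (negative_nonsquare (-3) ltac:(lia))
    sqrt_m3_classes_norm sqrt_m3_classes_mul eq_refl 32 9 odd_or_14_18_mod32 zero_mod3_or_pm1_mod9
    _ (2 * (2 * L)) L);
    [lia | lia | now exists 36 | now exists 128 | exact shifted_pair_check_m12 | ring | | | |].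
  - intros a b c E. split.
    + apply (markoff_residue_checkP 32 24 _ a b c); [lia | exact markoff_mod32_eq24 | rewrite E; mod_arith].
    + apply (markoff_residue_checkP 9 1 _ a b c); [lia | exact markoff_mod9_eq1 | rewrite E; mod_arith].
  - intros a b c E Ha. assert (H := markoff_small_nonneg a b c Ha). lia.
  - intros p Hp Hp2 Hpm. apply odd_prime_divisor_double_prime, odd_prime_divide_double; assumption.
  - rewrite Z.abs_neq by nia. nia.
Qed.

Definition odd_or_10_22_mod32 (a : Z) : bool := Z.odd a || (a mod 32 =? 10) || (a mod 32 =? 22).
Definition zero_mod3_or_pm4_mod9 (a : Z) : bool := (a mod 3 =? 0) || (a mod 9 =? 4) || (a mod 9 =? 5).

Lemma markoff_mod128_eq48 : markoff_even_residue_check 64 48 odd_or_10_22_mod32 = true.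
Proof. vm_compute. reflexivity. Qed.
Lemma markoff_mod9_eq7 : markoff_residue_check 9 7 zero_mod3_or_pm4_mod9 = true.
Proof. vm_compute. reflexivity. Qed.
Lemma shifted_pair_check_12 :
  shifted_pair_check 128 9 odd_or_10_22_mod32 zero_mod3_or_pm4_mod9 true sqrt3_classes = true.
Proof. vm_compute. reflexivity. Qed.

Lemma markoff_no_solution_12 L : prime L -> 37 <= L -> (L * L) mod 32 = 25 ->
  ~ exists x y z, markoff x y z = 4 + 12 * L * L.
Proof.
  intros HL HL37 HL32. assert (HL3 := prime_sqr_mod3 L HL ltac:(lia)).
  assert (Hlocal : forall a b c, markoff a b c = 4 + 12 * L * L ->
                     odd_or_10_22_mod32 (a mod 128) = true /\ zero_mod3_or_pm4_mod9 (a mod 9) = true).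
  { intros a b c E. split.
    - apply (markoff_even_residue_checkP 64 48 _ a b c);
        [lia | reflexivity | exact markoff_mod128_eq48 | rewrite E; mod_arith].
    - apply (markoff_residue_checkP 9 7 _ a b c); [lia | exact markoff_mod9_eq7 | rewrite E; mod_arith]. }
  apply (markoff_no_solution_of_checks true 3 sqrt3_classes (prime_nonsquare 3 prime_3) sqrt3_classes_norm
    sqrt3_classes_mul eq_refl 128 9 odd_or_10_22_mod32 zero_mod3_or_pm4_mod9 _ (2 * (2 * L)) L);
    [lia | lia | now exists 9 | now exists 128 | exact shifted_pair_check_12 | ring | exact Hlocal | | |].
  - intros a b c E Ha. destruct (Hlocal a b c E) as [H2 H3].
    assert (Ha' : a = 0 \/ a = 1 \/ a = 2) by lia. destruct Ha' as [-> | [-> | ->]]; discriminate.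
  - intros p Hp Hp2 Hpm. apply odd_prime_divisor_double_prime, odd_prime_divide_double; assumption.
  - rewrite Z.abs_eq by nia. nia.
Qed.

From mathcomp Require Import all_boot all_algebra zify ssrZ.
Import GRing.Theory.
Local Open Scope ring_scope.

Section IntToZ.
Local Open Scope Z_scope.

Lemma Zprime_of_prime (l : nat) : prime l -> Znumtheory.prime (Z.of_nat l).
Proof.
  move=> /primeP [l_gt1 l_dvd]. apply/prime_alt. split; first lia.
  move=> n n_range [q Eq].
  have : (Z.to_nat n %| l)%N by apply/dvdnP; exists (Z.to_nat q); lia.
  by case/l_dvd/orP => /eqP; lia.
Qed.

Lemma markoff_of_has_int_sol (r : int) (l : nat) : has_int_sol r l ->
  exists x y z, markoff x y z = 4 + Z_of_int r * Z.of_nat l * Z.of_nat l.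
Proof.
  move=> [x [y [z E]]]. exists (Z_of_int x), (Z_of_int y), (Z_of_int z).
  rewrite /markoff. rewrite !expr2 in E. lia.
Qed.

Lemma sqr_mod32_of_expn (l : nat) : (l ^ 2 %% 32 == 25)%N -> (Z.of_nat l * Z.of_nat l) mod 32 = 25.
Proof. rewrite (expnS l 1) expn1 => /eqP H. zify. Z.div_mod_to_equations. nia. Qed.

End IntToZ.

Theorem proposition5p12 :
  (forall l : nat, prime l -> (13 <= l)%N ->
     (l %% 9 == 4)%N || (l %% 9 == 5)%N -> ~ has_int_sol 2 l) /\
  (forall l : nat, prime l -> (37 <= l)%N -> (l ^ 2 %% 32 == 25)%N ->
     ~ sum_two_sq (1 + 3 * (l%:Z) ^+ 2) -> ~ has_int_sol 12 l) /\
  (forall l : nat, prime l -> (13 <= l)%N -> ~ has_int_sol (-2) l) /\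
  (forall l : nat, prime l -> (17 <= l)%N -> ~ has_int_sol (-3) l) /\
  (forall l : nat, prime l -> (37 <= l)%N -> ~ has_int_sol (-12) l).
Proof.
  split; [| split; [| split; [| split]]] => l /Zprime_of_prime l_prime l_ge.
  - move=> _ /markoff_of_has_int_sol; apply: (markoff_no_solution_2 _ l_prime); lia.
  - move=> /sqr_mod32_of_expn l_mod32 _ /markoff_of_has_int_sol.
    apply: (markoff_no_solution_12 _ l_prime _ l_mod32); lia.
  - move=> /markoff_of_has_int_sol; apply: (markoff_no_solution_m2 _ l_prime); lia.
  - move=> /markoff_of_has_int_sol; apply: (markoff_no_solution_m3 _ l_prime); lia.
  - move=> /markoff_of_has_int_sol; apply: (markoff_no_solution_m12 _ l_prime); lia.
Qed.
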